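(* For a Tychonoff space $X$ the following are equivalent: (i) the strong dual $L(X)_\beta$ of $C_p(X)$ has a bounded resolution; (ii) $L(X)_\beta$ has a fundamental bounded resolution; (iii) $X$ is countable.
   Context: $C_p(X)$ is the space of continuous real-valued functions on $X$ with the pointwise topology. Its topological dual is identified with $L(X)$, the vector space with Hamel basis $X$ (finite linear combinations of point evaluations); $L(X)_\beta$ denotes it with the strong topology $\beta(L(X),C(X))$ of uniform convergence on bounded subsets of $C_p(X)$. Order $\mathbb{N}^{\mathbb{N}}$ pointwise. A bounded resolution of a locally convex space $F$ is a family $\{B_\alpha:\alpha\in\mathbb{N}^{\mathbb{N}}\}$ of bounded sets covering $F$ with $B_\alpha\subseteq B_\beta$ whenever $\alpha\le\beta$; it is fundamental if every bounded subset of $F$ lies in some $B_\alpha$. *)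

From HB Require Import structures.
From mathcomp Require Import all_boot all_order all_algebra.
From mathcomp Require Import all_classical all_reals all_analysis.
Set Implicit Arguments. Unset Strict Implicit. Unset Printing Implicit Defensive.
Import Order.TTheory GRing.Theory Num.Theory.
Import numFieldNormedType.Exports.
Local Open Scope classical_set_scope.
Local Open Scope ring_scope.

Definition tychonoff_space (X : topologicalType) : Prop :=
  completely_regular_space X /\ hausdorff_space X.

Section Defs.
Variables (R : realType) (X : topologicalType).

Definition CX : set (X -> R) := [set f | continuous f].

Definition Cp_bounded (A : set (X -> R)) : Prop :=
  A `<=` CX /\ forall x : X, exists M : R, forall f, A f -> `|f x| <= M.

(* L(X): finite linear combinations of point evaluations, represented by
   their (finitely supported) coefficient functions *)
Definition LX : set (X -> R) := [set u | finite_set [set x | u x != 0]].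

Definition pairing (u : X -> R) (f : X -> R) : R :=
  \sum_(x \in [set x | u x != 0]) (u x * f x).

(* bounded subsets of L(X)_beta: every seminorm
   p_A(u) = sup_{f in A} |<u,f>|  (A bounded in C_p(X)) is bounded on B *)
Definition Lbeta_bounded (B : set (X -> R)) : Prop :=
  B `<=` LX /\
  forall A, Cp_bounded A ->
    exists M : R, forall u f, B u -> A f -> `|pairing u f| <= M.

Definition le_NN (a b : nat -> nat) : Prop := forall n, (a n <= b n)%N.

Definition bounded_resolution (K : (nat -> nat) -> set (X -> R)) : Prop :=
  (forall a, Lbeta_bounded (K a)) /\
  (forall u, LX u -> exists a, K a u) /\
  (forall a b, le_NN a b -> K a `<=` K b).

Definition fundamental_bounded_resolution
    (K : (nat -> nat) -> set (X -> R)) : Prop :=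
  bounded_resolution K /\
  (forall B, Lbeta_bounded B -> exists a, B `<=` K a).

End Defs.

From HB Require Import structures.
From mathcomp Require Import all_boot all_order all_algebra.
From mathcomp Require Import all_classical all_reals all_analysis.
From mathcomp Require Import finmap lra.
Set Implicit Arguments. Unset Strict Implicit. Unset Printing Implicit Defensive.
Import Order.TTheory GRing.Theory Num.Theory.
Import numFieldNormedType.Exports.
Local Open Scope classical_set_scope.
Local Open Scope ring_scope.

(* A bounded subset B of L(X)_beta is carried by a finite subset of X and has
   bounded coefficients. For the former: were the union of the supports of B
   infinite, it would contain points d_n with pairwise disjoint open
   neighbourhoods U_n (X is Tychonoff), and scaled bump functions at d_n
   vanishing off U_n would form a pointwise bounded subset of C_p(X) on which B
   is unbounded. A bounded resolution (B_a) thus yields a monotone cover of X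
   by the finite sets S_a = supp B_a. If X were uncountable, some a in N^N
   would make every C_k = U {S_b : b_j = a_j for j < k} uncountable; picking
   b_k with b_k|k = a|k and |S_(b_k)| >= k and bounding all b_k by a single g
   gives an infinite S_g. Conversely, for an injection i : X -> N, the sets of
   u with support in i^-1[0, a_0] and coefficients at most a_0 form a
   fundamental bounded resolution. *)

(* [b k n = a n] as soon as [n < k], so [g n] only has to dominate
   [b 0 n], ..., [b n.+1 n]. *)
Lemma le_NN_diagonal_bound (a : nat -> nat) (b : nat -> nat -> nat) :
  (forall k j, (j < k)%N -> b k j = a j) -> exists g, forall k, le_NN (b k) g.
Proof.
move=> b_agree; exists (fun n => \max_(j < n.+2) b j n)%N => k n.
have [kn|nk] := ltnP k n.+2; first exact: (leq_bigmax_cond (Ordinal kn)).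
rewrite b_agree ?(leq_trans _ nk) // -(b_agree n.+1 n) //.
exact: (leq_bigmax_cond (Ordinal (ltnSn n.+1))).
Qed.

Section FiniteResolution.
Variables (T : choiceType) (S : (nat -> nat) -> set T).
Hypothesis S_finite : forall a, finite_set (S a).
Hypothesis S_mono : forall a b, le_NN a b -> S a `<=` S b.

Definition agree_below (a b : nat -> nat) (k : nat) : Prop :=
  forall j, (j < k)%N -> b j = a j.

Definition prefix_union (a : nat -> nat) (k : nat) : set T :=
  \bigcup_(b in [set b | agree_below a b k]) S b.

Definition set_at (a : nat -> nat) (k n : nat) : nat -> nat :=
  fun j => if j == k then n else a j.

Lemma eq_prefix_union a a' k :
  agree_below a a' k -> prefix_union a k = prefix_union a' k.
Proof.
move=> aa'; rewrite /prefix_union; congr bigcup.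
by apply/seteqP; split=> b ab j jk /=; rewrite ab // aa'.
Qed.

Lemma prefix_union_split a k :
  prefix_union a k `<=`
    \bigcup_(n in [set: nat]) prefix_union (set_at a k n) k.+1.
Proof.
move=> x [b ab Sbx]; exists (b k) => //; exists b => // j.
rewrite ltnS leq_eqVlt => /orP[/eqP->|jk]; first by rewrite /set_at eqxx.
by rewrite /set_at (ltn_eqF jk); apply: ab.
Qed.

Lemma uncountable_branch a0 :
  ~ countable (prefix_union a0 0) ->
  exists a, forall k, ~ countable (prefix_union a k).
Proof.
move=> a0_unc.
have step (p : (nat -> nat) * nat) : exists n,
    ~ countable (prefix_union p.1 p.2) ->
    ~ countable (prefix_union (set_at p.1 p.2 n) p.2.+1).
  case: p => a k /=.
  have [[n n_unc]|all_cnt] :=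
    pselect (exists n, ~ countable (prefix_union (set_at a k n) k.+1)).
    by exists n.
  exists 0%N => a_unc; exfalso; apply: a_unc.
  apply: (sub_countable (subset_card_le (@prefix_union_split a k))).
  apply: bigcup_countable => // n _.
  by apply: contrapT => n_unc; apply: all_cnt; exists n.
have [next next_unc] := choice step.
pose sq :=
  nat_rect (fun _ => nat -> nat) a0 (fun k a => set_at a k (next (a, k))).
have sq_unc k : ~ countable (prefix_union (sq k) k).
  by elim: k => [//|k IH]; apply: (next_unc (sq k, k)).
have sq_agree k : agree_below (fun j => sq j.+1 j) (sq k) k.
  elim: k => [//|k IH] j; rewrite ltnS leq_eqVlt => /orP[/eqP->|jk] //=.
  by rewrite /set_at (ltn_eqF jk); apply: IH.
exists (fun j => sq j.+1 j) => k.
by rewrite (eq_prefix_union (sq_agree k)); exact: sq_unc.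
Qed.

Lemma prefix_union_common_fiber a k (s : seq T) :
  [set` s] `<=` prefix_union a k ->
  exists2 b, agree_below a b k & [set` s] `<=` S b.
Proof.
elim: s => [|x s IH] s_sub; first by exists a.
have [b ab sb] : exists2 b, agree_below a b k & [set` s] `<=` S b.
  by apply: IH => y ys; apply: s_sub; rewrite /= in_cons ys orbT.
have [b' ab' Sb'x] : prefix_union a k x by apply: s_sub; rewrite /= mem_head.
pose g j := maxn (b j) (b' j).
have bg : le_NN b g by move=> j; apply: leq_maxl.
have b'g : le_NN b' g by move=> j; apply: leq_maxr.
exists g => [j jk|y]; first by rewrite /g ab // ab' // maxnn.
rewrite /= in_cons => /orP[/eqP->|ys]; first exact: S_mono b'g _ Sb'x.
exact: S_mono bg _ (sb _ ys).
Qed.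

Lemma prefix_union_finite a : exists k, finite_set (prefix_union a k).
Proof.
apply: contrapT => /forallNP prefix_inf.
have large k : exists b, agree_below a b k /\
    exists2 B : {fset T}, [set` B] `<=` S b & (k <= #|` B|%fset)%N.
  have [B B_sub kB] := infinite_set_fset k (prefix_inf k).
  have [b ab Bb] := prefix_union_common_fiber B_sub.
  by exists b; split => //; exists B.
have [b bP] := choice large.
have [g bg] := le_NN_diagonal_bound (fun k => proj1 (bP k)).
apply: (proj2 (infinite_set_fsetP (S g))) (S_finite g) => k.
have [_ [B BS kB]] := bP k; exists B => //.
exact: subset_trans BS (S_mono (bg k)).
Qed.

Lemma finite_resolution_countable :
  (forall x, exists a, S a x) -> countable [set: T].
Proof.
move=> S_cover; apply: contrapT => T_unc.
have root_unc : ~ countable (prefix_union (fun=> 0%N) 0).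
  apply: contra_not T_unc => cnt; apply: sub_countable cnt.
  by apply: subset_card_le => x _; have [b Sbx] := S_cover x; exists b.
have [a a_unc] := uncountable_branch root_unc.
have [k fin] := prefix_union_finite a.
exact: a_unc k (finite_set_countable fin).
Qed.

End FiniteResolution.

Lemma ler_norm_fsum (R : numDomainType) (T : choiceType) (P Q : set T)
    (G H : T -> R) :
  finite_set Q -> P `<=` Q -> (forall x, P x -> `|G x| <= H x) ->
  (forall x, Q x -> 0 <= H x) ->
  `|\sum_(x \in P) G x| <= \sum_(x \in Q) H x.
Proof.
move=> Qfin PQ GH H0; rewrite -(setIidr PQ) fsbig_mkcondr !fsbig_finite //.
rewrite big_seq [leRHS]big_seq.
apply: le_trans (ler_norm_sum _ _ _) (ler_sum _ _).
move=> x; rewrite in_fset_set // => /set_mem Qx.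
by case: ifPn => [/set_mem/GH //|_]; rewrite normr0 H0.
Qed.

Lemma finite_set_bounded_nat (T : choiceType) (i : T -> nat) (A : set T) :
  finite_set A -> exists N, forall x, A x -> (i x <= N)%N.
Proof.
move=> Afin; exists (\big[addn/0%N]_(y \in A) i y) => x Ax.
by rewrite (fsbigD1 x) //= leq_addr.
Qed.

Lemma completely_regular_bump (R : realType) (X : topologicalType) (a : X)
    (F : set X) :
  completely_regular_space X -> closed F -> ~ F a ->
  exists f : X -> R, [/\ continuous f, f a = 1 & forall x, F x -> f x = 0].
Proof.
move=> crX cF Fa.
have /(uniform_separatorP (R:=R)) [g [cg _ ga gF]] := crX a F cF Fa.
exists (fun x => 1 - g x); split.
- by move=> x; apply: continuousB; [exact: cst_continuous | exact: cg].
- have -> : g a = 0 by apply: ga; exists a.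
  by rewrite subr0.
- move=> x Fx; have -> : g x = 1 by apply: gF; exists x.
  by rewrite subrr.
Qed.

Lemma peel_by_bump (R : realType) (X : topologicalType) (S W : set X)
    (h : X -> R) (d : X) :
  continuous h -> open W -> W d -> h d = 1 ->
  infinite_set (S `&` W `&` [set x | h x <= 2^-1]) ->
  exists U W', [/\ open U, U d, U `<=` W &
    [/\ open W', W' `<=` W, infinite_set (S `&` W') &
        forall x, U x -> ~ W' x]].
Proof.
move=> hc oW Wd hd inf.
have open_pre (D : set R) : open D -> open (W `&` h @^-1` D).
  by move=> oD; apply: openI => //; apply: open_comp => // x _; apply: hc.
exists (W `&` h @^-1` [set y | 2/3 < y]), (W `&` h @^-1` [set y | y < 2/3]).
split; [exact/open_pre/open_gt | by split => //=; rewrite hd; lra |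
       by move=> x [] |].
split; [exact/open_pre/open_lt | by move=> x [] | |].
- apply: contra_not inf; apply: sub_finite_set => x [[Sx Wx] /= hx].
  by split => //; split => //=; lra.
- by move=> x [_ /= hx1] [_ /= hx2]; lra.
Qed.

Section Tychonoff.
Variables (R : realType) (X : topologicalType).
Hypothesis tX : tychonoff_space X.

Lemma tychonoff_finite_closed (F : set X) : finite_set F -> closed F.
Proof.
apply: (proj1 (@accessible_finite_set_closed X)).
by apply: hausdorff_accessible; case: tX.
Qed.

Lemma tychonoff_bump (a : X) (F : set X) : closed F -> ~ F a ->
  exists f : X -> R, [/\ continuous f, f a = 1 & forall x, F x -> f x = 0].
Proof. by apply: completely_regular_bump; case: tX. Qed.

Lemma infinite_open_peel (S W : set X) :
  open W -> infinite_set (S `&` W) ->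
  exists2 d, (S `&` W) d & exists U W', [/\ open U, U d, U `<=` W &
    [/\ open W', W' `<=` W, infinite_set (S `&` W') &
        forall x, U x -> ~ W' x]].
Proof.
move=> oW inf; have [a SWa] := infinite_setN0 inf.
have [b [SWb /= ba]] := infinite_setN0 (infinite_setD inf (finite_set1 a)).
have [f [fc fb fa]] :=
  tychonoff_bump (tychonoff_finite_closed (finite_set1 a)) ba.
have [low|/contrapT lowfin] :=
  pselect (infinite_set (S `&` W `&` [set x | f x <= 2^-1])).
  by exists b => //; apply: peel_by_bump fc oW SWb.2 fb low.
exists a => //; apply: (peel_by_bump (h := fun x => 1 - f x) _ oW SWa.2).
- by move=> x; apply: continuousB; [exact: cst_continuous | exact: fc].
- by rewrite /= fa // subr0.
- apply: contra_not inf => highfin.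
  suff: S `&` W `<=` (S `&` W `&` [set x | f x <= 2^-1]) `|`
                     (S `&` W `&` [set x | 1 - f x <= 2^-1]).
    by move/sub_finite_set; apply; rewrite finite_setU.
  move=> x SWx; have [fx|fx] := leP (f x) 2^-1; [left | right] => //.
  by split => //=; lra.
Qed.

Lemma cellular_sequence (S : set X) : infinite_set S ->
  exists (d : nat -> X) (U : nat -> set X),
    [/\ forall n, S (d n), forall n, open (U n), forall n, U n (d n) &
        forall n m x, U n x -> U m x -> n = m].
Proof.
move=> Sinf.
(* A state [(W, (d, U))] is an open [W] meeting [S] in an infinite set,
   together with the last chosen point [d] and its neighbourhood [U]. *)
pose good (st : set X * (X * set X)) := open st.1 /\ infinite_set (S `&` st.1).
pose next (st st' : set X * (X * set X)) := good st ->
  (S `&` st.1) st'.2.1 /\ [/\ open st'.2.2, st'.2.2 st'.2.1, st'.2.2 `<=` st.1 &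
    [/\ open st'.1, st'.1 `<=` st.1, infinite_set (S `&` st'.1) &
        forall x, st'.2.2 x -> ~ st'.1 x]].
have step st : {st' | next st st'}.
  apply: cid; have [[oW Winf]|bad] := pselect (good st); last by exists st.
  have [d SWd [U [W' HUW]]] := infinite_open_peel oW Winf.
  by exists (W', (d, U)).
have [x0 _] := infinite_setN0 Sinf.
have [f [f0 fS]] := dependent_choice step (setT, (x0, setT)).
have fgood n : good (f n).
  elim: n => [|n IH]; first by rewrite f0; split; [exact: openT | rewrite setIT].
  by have [_ [_ _ _ [? _ ? _]]] := fS n IH.
have fdec n m : (n <= m)%N -> (f m).1 `<=` (f n).1.
  move=> /subnK <-; elim: (m - n)%N => [//|k IH].
  by have [_ [_ _ _ [_ sub _ _]]] := fS _ (fgood (k + n)%N) => x /sub /IH.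
have sep n m x : (n < m)%N -> (f n.+1).2.2 x -> ~ (f m.+1).2.2 x.
  move=> nm Unx Umx; have [_ [_ _ _ [_ _ _ disj]]] := fS n (fgood n).
  apply: disj Unx (fdec _ _ nm _ _).
  by have [_ [_ _ sub _]] := fS m (fgood m); apply: sub.
exists (fun n => (f n.+1).2.1), (fun n => (f n.+1).2.2); split.
- by move=> n; have [[]] := fS n (fgood n).
- by move=> n; have [_ []] := fS n (fgood n).
- by move=> n; have [_ []] := fS n (fgood n).
- move=> n m x Unx Umx; have [nm|mn|//] := ltngtP n m.
  + by have := sep _ _ _ nm Unx.
  + by have := sep _ _ _ mn Umx.
Qed.

End Tychonoff.

Section Lbeta.
Variables (R : realType) (X : topologicalType).
Implicit Types (B : set (X -> R)) (u f : X -> R).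

Definition Lsupport B : set X := \bigcup_(u in B) [set x | u x != 0].

Lemma pairing_supported_at u f d : LX u ->
  (forall x, u x != 0 -> x != d -> f x = 0) -> pairing u f = u d * f d.
Proof.
move=> Lu f0; have [ud0|ud] := eqVneq (u d) 0.
  rewrite ud0 mul0r /pairing fsbig1 // => x /= ux.
  rewrite f0 ?mulr0 //; apply: contraNneq ux => ->; exact/eqP.
rewrite /pairing (fsbigD1 d) //= fsbig1 ?addr0 // => x [/= ux xd].
by rewrite f0 ?mulr0 //; exact/eqP.
Qed.

Lemma Lsupport_coef_bound B : finite_set (Lsupport B) ->
  (forall x, exists M, forall u, B u -> `|u x| <= M) ->
  exists M, forall u x, B u -> `|u x| <= M.
Proof.
move=> fin /choice[M BM]; exists (\sum_(y \in Lsupport B) `|M y|) => u x Bu.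
have [->|ux] := eqVneq (u x) 0; first by rewrite normr0 fsumr_ge0.
have := @ler_norm_fsum _ _ [set x] _ u (fun y => `|M y|) fin.
rewrite fsbig_set1; apply=> [y ->|y _ |y _].
- by exists u.
- exact: le_trans (BM y u Bu) (ler_norm _).
- exact: normr_ge0.
Qed.

Lemma Lbeta_bounded_of_support B : B `<=` @LX R X -> finite_set (Lsupport B) ->
  (exists M, forall u x, B u -> `|u x| <= M) -> Lbeta_bounded B.
Proof.
move=> BL fin [M BM]; split => // A [_ /choice[C AC]].
exists (\sum_(x \in Lsupport B) M * `|C x|) => u f Bu Af.
apply: ler_norm_fsum => // [x ux|x _|x [v Bv vx]].
- by exists u.
- rewrite normrM ler_pM //; first exact: BM.
  exact: le_trans (AC x f Af) (ler_norm _).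
- by rewrite mulr_ge0 // (le_trans _ (BM v x Bv)).
Qed.

Lemma Lbeta_bounded1 u : LX u -> Lbeta_bounded [set u].
Proof.
move=> Lu; have fin : finite_set (Lsupport [set u]).
  by apply: sub_finite_set Lu => x [_ -> ux].
apply: Lbeta_bounded_of_support => //; first by move=> _ ->.
by apply: Lsupport_coef_bound => // x; exists `|u x| => _ ->.
Qed.

Lemma Cp_bounded_disjoint_supports (h : nat -> X -> R) (U : nat -> set X) :
  (forall n, continuous (h n)) -> (forall n x, ~ U n x -> h n x = 0) ->
  (forall n m x, U n x -> U m x -> n = m) -> Cp_bounded (range h).
Proof.
move=> hc h0 Udisj; split; first by move=> _ [n _ <-]; apply: hc.
move=> x; have [[m Umx]|noU] := pselect (exists m, U m x).
  exists `|h m x| => _ [n _ <-].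
  have [Unx|nUnx] := pselect (U n x); first by rewrite (Udisj _ _ _ Unx Umx).
  by rewrite h0 // normr0.
by exists 0 => _ [n _ <-]; rewrite h0 ?normr0 // => Unx; apply: noU; exists n.
Qed.

Hypothesis tX : tychonoff_space X.

Lemma Lbeta_bounded_support_finite B : Lbeta_bounded B -> finite_set (Lsupport B).
Proof.
move=> [BL Bb]; apply: contrapT.
move=> /(@cellular_sequence R X tX)[d [U [Sd oU Ud Udisj]]].
have /choice[u uP] : forall n, exists u, B u /\ u (d n) != 0.
  by move=> n; have [v Bv vd] := Sd n; exists v.
have /choice[f fP] : forall n, exists f : X -> R, [/\ continuous f, f (d n) = 1 &
    forall x, (~` U n `|` ([set x | u n x != 0] `\ d n)) x -> f x = 0].
  move=> n; apply: tychonoff_bump => //.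
    apply: closedU; first exact: open_closedC.
    apply: tychonoff_finite_closed => //.
    by apply: finite_setD; apply: BL (uP n).1.
  by move=> [/(_ (Ud n))|[_ /(_ erefl)]].
(* [range h] is bounded in [C_p(X)] since the [U n] are disjoint, whereas
   [<u n, h n> = n]. *)
pose h n x := n%:R / `|u n (d n)| * f n x.
have hc n : continuous (h n).
  move=> x; have [fc _ _] := fP n.
  exact: continuousM (@cst_continuous X R _ x) (fc x).
have h0 n x : ~ U n x -> h n x = 0.
  by move=> Unx; have [_ _ f0] := fP n; rewrite /h f0 ?mulr0 //; left.
have [M HM] := Bb _ (Cp_bounded_disjoint_supports hc h0 Udisj).
have [n Mn] : exists n : nat, M < n%:R.
  by exists (Num.truncn M).+1; exact: truncnS_gt.
have := HM (u n) (h n) (uP n).1 (ex_intro2 _ _ n I erefl).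
have [_ fd f0] := fP n.
rewrite (pairing_supported_at (d := d n)); first last.
- move=> x ux xd; rewrite /h f0 ?mulr0 //; right; split => //=; exact/eqP.
- exact: BL (uP n).1.
rewrite /h fd mulr1 normrM normf_div normr_nat normr_id mulrCA.
rewrite divff ?mulr1 ?normr_eq0.
  by move=> /(lt_le_trans Mn); rewrite ltxx.
exact: (uP n).2.
Qed.

Lemma Lbeta_bounded_coef_bound B : Lbeta_bounded B ->
  exists M, forall u x, B u -> `|u x| <= M.
Proof.
move=> Bbd; have fin := Lbeta_bounded_support_finite Bbd; case: Bbd => BL Bb.
apply: Lsupport_coef_bound => // x.
have [f [fc fx f0]] : exists f : X -> R, [/\ continuous f, f x = 1 &
    forall y, (Lsupport B `\ x) y -> f y = 0].
  apply: (tychonoff_bump R tX).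
    by apply: (tychonoff_finite_closed tX); exact: finite_setD.
  by move=> [_ /(_ erefl)].
have f_bdd : Cp_bounded [set f] by split=> [_ ->|y] //; exists `|f y| => _ ->.
have [M HM] := Bb _ f_bdd.
exists M => u Bu; have := HM u f Bu erefl.
rewrite (pairing_supported_at (d := x)) ?fx ?mulr1 //; first exact: BL.
by move=> y uy yx; apply: f0; split; [exists u | exact/eqP].
Qed.

Lemma Lbeta_boundedP B : Lbeta_bounded B <->
  [/\ B `<=` @LX R X, finite_set (Lsupport B) &
      exists M, forall u x, B u -> `|u x| <= M].
Proof.
split=> [Bbd|[]]; last exact: Lbeta_bounded_of_support.
split; [by case: Bbd | exact: Lbeta_bounded_support_finite |
       exact: Lbeta_bounded_coef_bound].
Qed.

End Lbeta.

Section Resolutions.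
Variables (R : realType) (X : topologicalType).
Hypothesis tX : tychonoff_space X.

Lemma bounded_resolution_countable (K : (nat -> nat) -> set (X -> R)) :
  bounded_resolution K -> countable [set: X].
Proof.
move=> [Kb [Kcov Kmono]].
apply: (@finite_resolution_countable X (fun a => Lsupport (K a))).
- by move=> a; have [] := (Lbeta_boundedP tX _).1 (Kb a).
- by move=> a b ab x [u Ku ux]; exists u => //; apply: Kmono ab u Ku.
- move=> x; pose dx y : R := (y == x)%:R.
  have [a Kdx] : exists a, K a dx.
    apply: Kcov; apply: sub_finite_set (finite_set1 x) => y.
    by rewrite /dx /=; have [->|] := eqVneq y x; rewrite ?eqxx.
  by exists a, dx; rewrite // /dx /= eqxx oner_eq0.
Qed.

Lemma countable_fundamental_resolution :
  countable [set: X] -> exists K, fundamental_bounded_resolution (R:=R) (X:=X) K.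
Proof.
move=> /countable_injP[i i_inj].
pose K a := [set u : X -> R | [/\ LX u, forall x, u x != 0 -> (i x <= a 0%N)%N
                                     & forall x, `|u x| <= (a 0%N)%:R]].
have K_bounded a : Lbeta_bounded (K a).
  apply/(Lbeta_boundedP tX); split; first by move=> u [].
    apply: sub_finite_set (i @^-1` `I_(a 0%N).+1) _ _.
      by move=> x [u [_ ui _] ux]; rewrite /= ltnS; apply: ui.
    apply: finite_preimage (finite_II _) => x y _ _; apply: i_inj; exact: in_setT.
  by exists (a 0%N)%:R => u x [].
have K_absorbs B : Lbeta_bounded B -> exists a, B `<=` K a.
  move=> /(Lbeta_boundedP tX)[BL fin [M BM]].
  have [N iN] := finite_set_bounded_nat i fin.
  exists (fun=> maxn N (Num.truncn M).+1) => u Bu; split => [|x ux|x].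
  - exact: BL.
  - by apply: leq_trans (iN x _) (leq_maxl _ _); exists u.
  - apply: le_trans (BM u x Bu) (ltW (lt_le_trans (truncnS_gt M) _)).
    by rewrite ler_nat leq_maxr.
exists K; split; [split; [|split]|] => //.
- move=> u Lu; have [a /(_ u erefl)] := K_absorbs _ (Lbeta_bounded1 Lu).
  by exists a.
- move=> a b ab u [Lu ui ub]; split => // [x /ui/leq_trans|x]; first exact.
  by apply: le_trans (ub x) _; rewrite ler_nat.
Qed.

End Resolutions.

Theorem proposition3p7 (R : realType) (X : topologicalType) :
  tychonoff_space X ->
  [/\ ((exists K, bounded_resolution (R:=R) (X:=X) K) <->
        (exists K, fundamental_bounded_resolution (R:=R) (X:=X) K)),
      ((exists K, fundamental_bounded_resolution (R:=R) (X:=X) K) <->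
        countable [set: X]) &
      ((exists K, bounded_resolution (R:=R) (X:=X) K) <->
        countable [set: X])].
Proof.
move=> tX.
have res_cnt : (exists K, bounded_resolution (R:=R) (X:=X) K) ->
    countable [set: X].
  by case=> K /(bounded_resolution_countable tX).
have cnt_fund := @countable_fundamental_resolution R X tX.
have fund_res : (exists K, fundamental_bounded_resolution (R:=R) (X:=X) K) ->
    exists K, bounded_resolution (R:=R) (X:=X) K.
  by case=> K [Kres _]; exists K.
split; split.
- by move/res_cnt/cnt_fund.
- exact: fund_res.
- by move/fund_res/res_cnt.
- exact: cnt_fund.
- exact: res_cnt.
- by move/cnt_fund/fund_res.
Qed.
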